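(* Let $S\subset\mathbb{R}^n$ be a smooth cylinder hypersurface with axis vector $e$, and consider rolling of the particle on $S$ under the constant force $f=(0,-mge)$. A path $q(t)=(A(t),a(t))\in SO(n)\times S$ that solves the constrained Newton's equation for this rolling motion is the solution of an initial value problem for the system $$\dot a=rU\nu_a,\qquad \dot A=UA,\qquad \dot U=-\frac{1}{(1+\gamma^2)r}\big(r^2U\mathbb{S}_aU\nu_a-ge\big)\wedge\nu_a,$$ where $U=\dot AA^{-1}\in\mathfrak{so}(n)$.
   Context: The particle is a ball of radius $r>0$ with rotationally symmetric mass distribution of total mass $m$ and second-moment matrix per unit mass $\lambda I$, $\lambda=(r\gamma)^2/2$, $\gamma>0$. $S$ is the hypersurface of positions of the center of the particle, $\nu_a$ its unit normal at $a$ (pointing into the region containing the centers), and $\mathbb{S}_a$ its shape operator: the symmetric map of $T_aS$ with $\mathbb{S}_av=-D_v\nu$ (directional derivative). For $a,b\in\mathbb{R}^n$, $a\wedge b\in\mathfrak{so}(n)$ is $(a\wedge b)x=(a\cdot x)b-(b\cdot x)a$. On $M=SO(n)\times S$ use the kinetic energy metric $\langle(U_\xi A,u_\xi),(U_\eta A,u_\eta)\rangle=m\{\tfrac{(r\gamma)^2}{2}\mathrm{Tr}(U_\xi U_\eta^\dagger)+u_\xi\cdot u_\eta\}$, with Levi-Civita connection $\nabla$; for $\dot q=(UA,u)$ one has $\frac{\nabla\dot q}{dt}=(\dot UA,\frac{Du}{dt})$, $D$ the Levi-Civita connection of $S$. The no-slip space at $q=(A,a)$ is $\mathfrak{S}_q=\{(UA,u):u=rU\nu_a\}$,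 and $\mathfrak{S}^\perp_q$ denotes its orthogonal complement inside $T_qM$ (with respect to the kinetic energy metric). A path satisfies the constrained Newton's equation if $\dot q(t)\in\mathfrak{S}_{q(t)}$ for all $t$ and $\frac{\nabla\dot q}{dt}=m^{-1}f+N$ for some $N(t)\in\mathfrak{S}^\perp_{q(t)}$. *)

From HB Require Import structures.
From mathcomp Require Import all_boot all_order all_algebra.
From mathcomp Require Import all_classical all_reals all_analysis.
Set Implicit Arguments. Unset Strict Implicit. Unset Printing Implicit Defensive.
Import Order.TTheory GRing.Theory Num.Theory.
Import numFieldNormedType.Exports.
Local Open Scope classical_set_scope.
Local Open Scope ring_scope.

Section Rolling.
Variables (R : realType) (n : nat).
Notation vec := 'cV[R]_n.
Notation mat := 'M[R]_n.

Definition dotv (u v : vec) : R := (u^T *m v) ord0 ord0.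

Definition wedge (a b : vec) : mat := b *m a^T - a *m b^T.

Definition skew (U : mat) : Prop := U^T = - U.
Definition rotation (A : mat) : Prop := A^T *m A = 1%:M /\ \det A = 1.

Fixpoint smooth_k (k : nat) (O : set vec) {W : normedModType R} (f : vec -> W) : Prop :=
  match k with
  | 0 => forall x, O x -> {for x, continuous f}
  | k'.+1 => forall v : vec, (forall x, O x -> derivable f x v) /\
                             smooth_k k' O (fun x => derive f x v)
  end.
Definition smooth_on (O : set vec) {W : normedModType R} (f : vec -> W) : Prop :=
  forall k, smooth_k k O f.

Definition grad (phi : vec -> R) (x : vec) : vec :=
  \col_i derive phi x (delta_mx i ord0 : vec).

(* Hypersurface S = {x in O | phi x = 0}, O open, phi smooth on O with nonvanishing
   gradient on S; this describes exactly the oriented embedded hypersurfaces. *)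
Definition hsurf (O : set vec) (phi : vec -> R) : set vec := [set x | O x /\ phi x = 0].

Definition regular_defining (O : set vec) (phi : vec -> R) : Prop :=
  open O /\ smooth_on O phi /\ (forall x, hsurf O phi x -> grad phi x != 0).

(* unit normal field nu = grad phi / |grad phi| (the orientation, i.e. the side of S
   containing the centers, is encoded by the sign of phi) *)
Definition unormal (phi : vec -> R) (x : vec) : vec :=
  (Num.sqrt (dotv (grad phi x) (grad phi x)))^-1 *: grad phi x.

Definition shapeop (phi : vec -> R) (a v : vec) : vec := - derive (unormal phi) a v.

Definition tangentS (phi : vec -> R) (a v : vec) : Prop := dotv (unormal phi a) v = 0.

Definition cylinder (O : set vec) (phi : vec -> R) (e : vec) : Prop :=
  dotv e e = 1 /\ forall x (s : R), hsurf O phi x -> hsurf O phi (x + s *: e).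

Definition tangentM (phi : vec -> R) (A : mat) (a : vec) (xi : mat * vec) : Prop :=
  skew (xi.1 *m invmx A) /\ tangentS phi a xi.2.

Definition kinetic (m r gamma : R) (A : mat) (xi eta : mat * vec) : R :=
  m * ((r * gamma) ^+ 2 / 2 * \tr ((xi.1 *m invmx A) *m (eta.1 *m invmx A)^T)
       + dotv xi.2 eta.2).

Definition noslip (phi : vec -> R) (r : R) (A : mat) (a : vec) (xi : mat * vec) : Prop :=
  tangentM phi A a xi /\ xi.2 = r *: ((xi.1 *m invmx A) *m unormal phi a).

Definition noslip_perp (phi : vec -> R) (m r gamma : R) (A : mat) (a : vec)
    (N : mat * vec) : Prop :=
  tangentM phi A a N /\
  forall xi, noslip phi r A a xi -> kinetic m r gamma A N xi = 0.

Definition angvel (A : R -> mat) (t : R) : mat := derive1 A t *m invmx (A t).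

(* Levi-Civita connection of S (induced metric): tangential part of the ambient
   derivative of u along a. *)
Definition covD (phi : vec -> R) (a : vec) (du : vec) : vec :=
  du - dotv (unormal phi a) du *: unormal phi a.

Definition constrained_newton (O : set vec) (phi : vec -> R) (m r gamma : R)
    (f : mat * vec) (I : set R) (A : R -> mat) (a : R -> vec) : Prop :=
  forall t, I t ->
    rotation (A t) /\ hsurf O phi (a t) /\
    derivable A t 1 /\ derivable a t 1 /\
    derivable (derive1 A) t 1 /\ derivable (derive1 a) t 1 /\
    noslip phi r (A t) (a t) (derive1 A t, derive1 a t) /\
    exists N : mat * vec, noslip_perp phi m r gamma (A t) (a t) N /\
      (derive1 (angvel A) t *m A t, covD phi (a t) (derive1 (derive1 a) t))
      = (m^-1 *: f.1 + N.1, m^-1 *: f.2 + N.2).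

End Rolling.

From Pilot Require Import Defs.
From HB Require Import structures.
From mathcomp Require Import all_boot all_order all_algebra.
From mathcomp Require Import all_classical all_reals all_analysis.
From mathcomp Require Import ring lra.
Set Implicit Arguments. Unset Strict Implicit. Unset Printing Implicit Defensive.
Import Order.TTheory GRing.Theory Num.Theory.
Import numFieldNormedType.Exports.
Local Open Scope classical_set_scope.
Local Open Scope ring_scope.

(* At a time t, the no-slip condition gives a' = rUν at once, and A' = UA since A
   is invertible.  Pairing the constraint force N = (N₁, N₂) with the no-slip
   vectors (WA, rWν), W skew, gives (rγ)²/2 tr(U'Wᵀ) + r N₂·Wν = 0 for every
   W ∈ so(n); since N₂·Wν = -tr((N₂∧ν)Wᵀ)/2, this forces U' = (rγ²)⁻¹ N₂∧ν.
   Differentiating a' = rUν(a) gives a'' = rU'ν - r²U S_a(Uν), and Newton's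
   equation identifies N₂ with the tangential part of a'' plus ge.  Hence U'
   solves the linear equation U' = c (rU'ν - X)∧ν with c = (rγ²)⁻¹ and
   X = r²U S_a(Uν) - ge, whose unique skew solution is the claimed formula.  Smoothness of φ enters only through the differentiability
   of ν, which follows from the continuity of the partial derivatives of ∇φ. *)

Section OneVariable.
Variable R : realType.

Lemma mvt_affine_le (F dF : R -> R) (a b c eps : R) : a <= b ->
  (forall u : R, u \in `[a, b] -> is_derive u 1 F (dF u)) ->
  (forall u : R, u \in `[a, b] -> `|dF u - c| <= eps) ->
  `|F b - F a - (b - a) * c| <= (b - a) * eps.
Proof.
move=> ab FdF dFc.
have oo_cc u : u \in `]a, b[ -> u \in `[a, b].
  by rewrite !in_itv /= => /andP[au ub]; rewrite !ltW.
have Fcont : {within `[a, b], continuous F}.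
  apply: continuous_in_subspaceT => u /[!inE] /FdF [dFu _].
  exact/differentiable_continuous/derivable1_diffP.
have [u uab ->] := MVT_segment ab (fun u uab => FdF u (oo_cc u uab)) Fcont.
rewrite [dF u * _]mulrC -mulrBr normrM ger0_norm ?subr_ge0 //.
by rewrite ler_wpM2l ?subr_ge0 // dFc.
Qed.

Lemma mvt_affine_le_norm (F dF : R -> R) (h c eps : R) :
  (forall u : R, `|u| <= `|h| -> is_derive u 1 F (dF u)) ->
  (forall u : R, `|u| <= `|h| -> `|dF u - c| <= eps) ->
  `|F h - F 0 - h * c| <= `|h| * eps.
Proof.
move=> FdF dFc; have [h0|h0] := leP 0 h.
  have inh (u : R) : u \in `[0, h] -> `|u| <= `|h|.
    by rewrite in_itv /= => /andP[u0 uh]; rewrite !ger0_norm.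
  have := mvt_affine_le h0 (fun u uh => FdF u (inh u uh)) (fun u uh => dFc u (inh u uh)).
  by rewrite (ger0_norm h0) subr0.
have inh (u : R) : u \in `[h, 0] -> `|u| <= `|h|.
  by rewrite in_itv /= => /andP[hu u0]; rewrite ler0_norm // ltr0_norm // lerN2.
have := mvt_affine_le (ltW h0) (fun u uh => FdF u (inh u uh))
  (fun u uh => dFc u (inh u uh)).
rewrite (ltr0_norm h0) sub0r -normrN; congr (`|_| <= _); ring.
Qed.

End OneVariable.

Section Differentials.
Variables (R : realType) (V W : normedModType R).

Lemma is_derive_line (f : V -> W) (p v : V) (s : R) :
  derivable f (p + s *: v) v ->
  is_derive s 1 (fun u : R => f (p + u *: v)) ('D_v f (p + s *: v)).
Proof.
move=> dv.
have diff_quot : (fun h : R => h^-1 *: (((fun u : R => f (p + u *: v)) \o shift s) (h *: 1)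
           - f (p + s *: v))) =
         (fun h : R => h^-1 *: ((f \o shift (p + s *: v)) (h *: v) - f (p + s *: v))).
  apply/funext => h /=; congr (_ *: (f _ - _)).
  by rewrite /= scaler1 scalerDl addrCA.
apply: DeriveDef; first by rewrite /derivable diff_quot.
by rewrite /derive diff_quot.
Qed.

Lemma differentiable_expansion (f : V -> W) (L : {linear V -> W}) (x : V) :
  continuous L -> f \o shift x = cst (f x) + L +o_ 0 id -> differentiable f x.
Proof. by move=> Lc fL; apply/diff_locallyP; rewrite (diff_unique Lc fL). Qed.

Lemma derive1_comp_differentiable (F : V -> W) (a : R -> V) t :
  differentiable F (a t) -> derivable a t 1 ->
  derivable (F \o a) t 1 /\ derive1 (F \o a) t = 'D_(derive1 a t) F (a t).
Proof.
move=> dF /derivable1_diffP da.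
have dFa := differentiable_comp da dF.
split; first exact/derivable1_diffP.
by rewrite derive1E !deriveE // diff_comp // derive1E deriveE.
Qed.

End Differentials.

Section Vectors.
Variables (R : realType) (n : nat).
Local Notation vec := 'cV[R]_n.
Local Notation basis i := (delta_mx i ord0 : vec).
Implicit Types (u v w h x : vec).

Lemma dotvE u v : dotv u v = \sum_i u i ord0 * v i ord0.
Proof. by rewrite /dotv !mxE; apply: eq_bigr => i _; rewrite mxE. Qed.

Lemma dotvC u v : dotv u v = dotv v u.
Proof. by rewrite !dotvE; apply: eq_bigr => i _; rewrite mulrC. Qed.

Lemma dotvDr u v w : dotv u (v + w) = dotv u v + dotv u w.
Proof. by rewrite /dotv mulmxDr mxE. Qed.

Lemma dotvZr u v k : dotv u (k *: v) = k * dotv u v.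
Proof. by rewrite /dotv -scalemxAr mxE. Qed.

Lemma dotvBr u v w : dotv u (v - w) = dotv u v - dotv u w.
Proof. by rewrite dotvDr -scaleN1r dotvZr mulN1r. Qed.

Lemma dotvZl u v k : dotv (k *: u) v = k * dotv u v.
Proof. by rewrite dotvC dotvZr dotvC. Qed.

Lemma dotv_gt0 v : v != 0 -> 0 < dotv v v.
Proof.
move=> v0; have sq_ge0 i : 0 <= v i ord0 * v i ord0 by rewrite -expr2 sqr_ge0.
rewrite lt_def dotvE sumr_ge0 ?andbT //.
apply: contra v0 => /eqP /psumr_eq0P v2; apply/eqP/matrixP => i j.
have := v2 (fun i _ => sq_ge0 i) i isT.
by rewrite (ord1 j) mxE -expr2 => /eqP; rewrite sqrf_eq0 => /eqP.
Qed.

Lemma dotv_is_linear u : linear (dotv u).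
Proof. by move=> k v w; rewrite dotvDr dotvZr. Qed.

Definition dotv_linear u : {linear vec -> R} :=
  HB.pack (dotv u) (GRing.isLinear.Build _ _ _ _ _ (dotv_is_linear u)).

Lemma dotv_continuous u : continuous (dotv u).
Proof.
move=> x; have -> : dotv u = \sum_i (fun h : vec => u i ord0 * h i ord0).
  by apply/funext => h; rewrite dotvE fct_sumE.
apply: (big_ind (fun g : vec -> R => {for x, continuous g})).
- exact: cst_continuous.
- by move=> g1 g2; apply: continuousD.
- by move=> i _; apply: continuousM; [exact: cst_continuous|exact: coord_continuous].
Qed.

Lemma col_norm_le h d : 0 <= d -> (forall i, `|h i ord0| <= d) -> `|h| <= d.
Proof.
move=> d0 hd; change (mx_norm h <= d); rewrite mx_normrE.
by apply: bigmax_le => // -[i j] _; rewrite (ord1 j).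
Qed.

Lemma col_entry_norm_le h i : `|h i ord0| <= `|h|.
Proof.
change (`|h i ord0| <= mx_norm h); rewrite mx_normrE.
exact: (le_bigmax _ (fun ij : 'I_n * 'I_1 => `|h ij.1 ij.2|) (i, ord0)).
Qed.

Definition trunc_col (k : nat) h : vec := \col_i (if (i < k)%N then h i ord0 else 0).

Lemma trunc_col0 h : trunc_col 0 h = 0.
Proof. by apply/matrixP => i j; rewrite !mxE. Qed.

Lemma trunc_col_full h : trunc_col n h = h.
Proof. by apply/matrixP => i j; rewrite !mxE ltn_ord (ord1 j). Qed.

Lemma trunc_colS (k : 'I_n) h :
  trunc_col k.+1 h = trunc_col k h + h k ord0 *: basis k.
Proof.
apply/matrixP => i j; rewrite !mxE (ord1 j) eqxx andbT ltnS leq_eqVlt.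
have [<-|ik] := eqVneq i k; first by rewrite eqxx ltnn mulr1 add0r.
by move: ik; rewrite -val_eqE => /negbTE ->; rewrite mulr0 addr0.
Qed.

Lemma trunc_col_line_norm_le (k : 'I_n) h (s : R) :
  `|s| <= `|h k ord0| -> `|trunc_col k h + s *: basis k| <= `|h|.
Proof.
move=> sk; apply: col_norm_le => // i; rewrite !mxE eqxx andbT.
have [<-|ik] := eqVneq i k.
  by rewrite ltnn add0r mulr1 (le_trans sk) // col_entry_norm_le.
rewrite mulr0 addr0; case: ifP => _; last by rewrite normr0.
exact: col_entry_norm_le.
Qed.

Lemma dotv_telescope (f : vec -> R) x h c :
  f (h + x) - (f x + dotv c h) =
  \sum_(k < n) (f (x + trunc_col k.+1 h) - f (x + trunc_col k h) - h k ord0 * c k ord0).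
Proof.
rewrite sumrB -(big_mkord xpredT (fun k => f (x + trunc_col k.+1 h) - f (x + trunc_col k h))).
rewrite telescope_sumr // trunc_col_full trunc_col0 addr0 [h + x]addrC dotvE.
by rewrite opprD addrA; congr (_ - _); apply: eq_bigr => i _; rewrite mulrC.
Qed.

Lemma trunc_col_increment_le (f : vec -> R) x h (k : 'I_n) (c eps : R) :
  0 <= eps ->
  (forall s : R, `|s| <= `|h k ord0| ->
     derivable f (x + trunc_col k h + s *: basis k) (basis k) /\
     `|c - 'D_(basis k) f (x + trunc_col k h + s *: basis k)| <= eps) ->
  `|f (x + trunc_col k.+1 h) - f (x + trunc_col k h) - h k ord0 * c| <= `|h| * eps.
Proof.
move=> eps0 fk; rewrite trunc_colS addrA.
pose line s := x + trunc_col k h + s *: basis k.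
have := @mvt_affine_le_norm _ (f \o line) (fun s => 'D_(basis k) f (line s))
  (h k ord0) c eps.
rewrite /line /= scale0r addr0 => /(_ _ _)/le_trans; apply.
- by move=> s /fk [fd _]; exact: is_derive_line.
- by move=> s /fk [_]; rewrite distrC.
by rewrite ler_wpM2r // col_entry_norm_le.
Qed.

Lemma differentiable_continuous_partials (f : vec -> R) (O : set vec) (x : vec) :
  open O -> O x ->
  (forall i y, O y -> derivable f y (basis i)) ->
  (forall i y, O y -> {for y, continuous (fun z => 'D_(basis i) f z)}) ->
  differentiable f x.
Proof.
move=> oO Ox fd fc.
apply: (@differentiable_expansion _ _ _ _ (dotv_linear (grad f x)));
  first exact: dotv_continuous.
apply/eqaddoP => eps eps0.
pose eps' := eps / n.+1%:R.
have eps'0 : 0 < eps' by rewrite divr_gt0 // ltr0n.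
have [d d0 near_x] : exists2 d : R, 0 < d & forall y, `|x - y| < d ->
    O y /\ forall i, `|grad f x i ord0 - 'D_(basis i) f y| <= eps'.
  have : \forall y \near x, O y /\
      forall i, `|grad f x i ord0 - 'D_(basis i) f y| <= eps'.
    near=> y; split; first by near: y; apply: open_nbhs_nbhs.
    near: y; apply: filter_forall => i; rewrite mxE.
    by have /cvgrPdist_le := fc i x Ox; apply.
  move=> /nbhs_ballP [d d0 dx]; exists d => // y xy.
  by apply: dx; rewrite -ball_normE.
near=> h.
have hd : `|h| < d by near: h; exact: (@nbhs0_lt R vec d d0).
change (`|f (h + x) - (f x + dotv (grad f x) h)| <= eps * `|h|).
rewrite dotv_telescope.
apply: le_trans (ler_norm_sum _ _ _) _.
apply: (@le_trans _ _ (\sum_(k < n) `|h| * eps')).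
  apply: ler_sum => k _.
  apply: (trunc_col_increment_le (c := grad f x k ord0) (ltW eps'0)) => s sk.
  have /near_x [Oy /(_ k) dk] : `|x - (x + trunc_col k h + s *: basis k)| < d.
    rewrite -addrA opprD addrA subrr sub0r normrN.
    exact: le_lt_trans (trunc_col_line_norm_le sk) hd.
  by split => //; exact: fd.
rewrite sumr_const card_ord -mulrnAr /eps' mulrC ler_wpM2r //.
rewrite -mulr_natr -mulrA ler_piMr ?(ltW eps0) // mulrC.
by rewrite ler_pdivrMr ?ltr0n // mul1r ler_nat.
Unshelve. all: by end_near.
Qed.

Lemma differentiable_col (V : normedModType R) (F : V -> vec) (p : V) :
  (forall i, differentiable (fun y => F y i ord0) p) -> differentiable F p.
Proof.
move=> dF; have -> : F = \sum_i (fun y => F y i ord0 *: basis i).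
  apply/funext => y; rewrite fct_sumE {1}[F y]matrix_sum_delta.
  by apply: eq_bigr => i _; rewrite big_ord1.
by apply: differentiable_sum => i; exact: differentiableZl.
Qed.

Lemma differentiable_grad (O : set vec) (phi : vec -> R) x :
  open O -> smooth_on O phi -> O x -> differentiable (grad phi) x.
Proof.
move=> oO sm Ox; apply: differentiable_col => i.
have -> : (fun y => grad phi y i ord0) = (fun y => 'D_(basis i) phi y).
  by apply/funext => y; rewrite mxE.
have [_ dphi_C1] := sm 2%N (basis i).
apply: (differentiable_continuous_partials oO Ox) => j y Oy.
- by have [dj _] := dphi_C1 (basis j); exact: dj.
- by have [_ cj] := dphi_C1 (basis j); exact: cj.
Qed.

Lemma differentiable_unormal (O : set vec) (phi : vec -> R) x :
  open O -> smooth_on O phi -> O x -> grad phi x != 0 ->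
  differentiable (unormal phi) x.
Proof.
move=> oO sm Ox g0.
have dg := differentiable_grad oO sm Ox.
have dgi i : differentiable (fun y => grad phi y i ord0) x.
  exact: differentiable_comp dg (differentiable_coord _ i ord0).
pose sq y := dotv (grad phi y) (grad phi y).
have dsq : differentiable sq x.
  have -> : sq = \sum_i ((fun y => grad phi y i ord0) * (fun y => grad phi y i ord0)).
    by apply/funext => y; rewrite fct_sumE /sq dotvE.
  by apply: differentiable_sum => i; exact: differentiableM.
have sq_gt0 : 0 < sq x := dotv_gt0 g0.
have dnorm : differentiable (fun y => Num.sqrt (sq y)) x.
  apply: (differentiable_comp dsq); apply/derivable1_diffP.
  by have [] := is_derive1_sqrt sq_gt0.
have dinv : differentiable (fun y => (Num.sqrt (sq y))^-1) x.
  by apply: differentiableV dnorm _; rewrite sqrtr_eq0 -ltNge.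
apply: differentiable_col => i.
have -> : (fun y => unormal phi y i ord0) =
    (fun y => (Num.sqrt (sq y))^-1) * (fun y => grad phi y i ord0).
  by apply/funext => y; rewrite /unormal mxE.
exact: differentiableM.
Qed.

End Vectors.

Section MatrixCurves.
Variable R : realType.

Lemma derivable_trmx m p (M : R -> 'M[R]_(m, p)) t :
  derivable M t 1 -> derivable (fun s => (M s)^T) t 1.
Proof.
move=> /derivable_mxP dM; apply/derivable_mxP => i j.
by under eq_fun do rewrite mxE; exact: dM.
Qed.

Lemma derive1_mulmx m p q (M : R -> 'M[R]_(m, p)) (N : R -> 'M[R]_(p, q)) t :
  derivable M t 1 -> derivable N t 1 ->
  derivable (fun s => M s *m N s) t 1 /\
  derive1 (fun s => M s *m N s) t = derive1 M t *m N t + M t *m derive1 N t.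
Proof.
move=> dM dN; have /derivable_mxP dMij := dM; have /derivable_mxP dNij := dN.
have MN_ij i j : (fun s => (M s *m N s) i j) =
    \sum_k ((fun s => M s i k) * (fun s => N s k j)).
  by apply/funext => s; rewrite fct_sumE mxE.
have dMN : derivable (fun s => M s *m N s) t 1.
  apply/derivable_mxP => i j; rewrite MN_ij.
  by apply: derivable_sum => k; exact: derivableM.
split => //; rewrite !derive1E !derive_mx //; apply/matrixP => i j.
rewrite !mxE MN_ij derive_sum => [|k]; last exact: derivableM.
rewrite -big_split; apply: eq_bigr => k _.
by rewrite deriveM // !mxE /GRing.scale /= addrC mulrC [X in _ + X]mulrC.
Qed.

End MatrixCurves.

Section SkewAlgebra.
Variables (R : realType) (n : nat).
Local Notation vec := 'cV[R]_n.
Local Notation mat := 'M[R]_n.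
Implicit Types (u v w x : vec) (V W : mat).

Lemma trmx_mul_col u v : u^T *m v = (dotv u v)%:M.
Proof. exact: mx11_scalar. Qed.

Lemma wedge_mul u v x : wedge u v *m x = dotv u x *: v - dotv v x *: u.
Proof. by rewrite /wedge mulmxBl -!mulmxA !trmx_mul_col !mul_mx_scalar. Qed.

Lemma wedgeZl k u v : wedge (k *: u) v = k *: wedge u v.
Proof. by rewrite /wedge linearZ /= -scalemxAr -scalemxAl scalerBr. Qed.

Lemma wedgeBl u w v : wedge (u - w) v = wedge u v - wedge w v.
Proof.
rewrite /wedge linearB /= mulmxBr mulmxBl !opprB addrACA [RHS]addrACA.
by rewrite [X in _ = _ + X]addrC.
Qed.

Lemma wedge_self v : wedge v v = 0.
Proof. exact: subrr. Qed.

Lemma skew_wedge u v : Defs.skew (wedge u v).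
Proof. by rewrite /Defs.skew /wedge linearB /= !trmx_mul !trmxK opprB. Qed.

Lemma dotv_skewr V u v : Defs.skew V -> dotv u (V *m v) = - dotv v (V *m u).
Proof.
move=> sV; rewrite dotvC /dotv trmx_mul sV mulmxN mulNmx -mulmxA.
by rewrite [in LHS]mxE.
Qed.

Lemma dotv_skew V v : Defs.skew V -> dotv v (V *m v) = 0.
Proof.
move=> sV; apply/eqP; rewrite -[_ == 0](mulrn_eq0 _ 2) mulr2n.
by rewrite {1}(dotv_skewr _ _ sV) addNr.
Qed.

Lemma mxtrace_wedge_skew u v W : Defs.skew W ->
  \tr (wedge u v *m W^T) = -2 * dotv u (W *m v).
Proof.
move=> sW; rewrite /wedge mulmxBl raddfB /= -!mulmxA !(mxtrace_mulC _ (_ *m W^T)).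
rewrite sW !mulmxN !mulNmx !raddfN /= -!mulmxA /mxtrace !big_ord1.
rewrite -[(u^T *m (W *m v)) _ _]/(dotv u (W *m v)).
rewrite -[(v^T *m (W *m u)) _ _]/(dotv v (W *m u)).
rewrite (dotv_skewr _ _ sW); lra.
Qed.

Lemma skew_orthogonal_eq0 V : Defs.skew V ->
  (forall W, Defs.skew W -> \tr (V *m W^T) = 0) -> V = 0.
Proof.
move=> sV /(_ V sV); rewrite /mxtrace => /eqP.
rewrite psumr_eq0 => [/allP V0|i _]; last first.
  by rewrite mxE sumr_ge0 // => j _; rewrite mxE -expr2 sqr_ge0.
apply/matrixP => i j; have /implyP /(_ isT) := V0 i (mem_index_enum i).
rewrite mxE psumr_eq0 => [/allP /(_ j (mem_index_enum j))|k _]; last first.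
  by rewrite mxE -expr2 sqr_ge0.
by rewrite implyTb mxE -expr2 sqrf_eq0 mxE => /eqP.
Qed.

Lemma skew_eq_wedge V u v (k1 k2 : R) : k1 != 0 -> Defs.skew V ->
  (forall W, Defs.skew W -> k1 * \tr (V *m W^T) + k2 * dotv u (W *m v) = 0) ->
  V = (k2 / (2 * k1)) *: wedge u v.
Proof.
move=> k10 sV orth; apply/eqP; rewrite -subr_eq0; apply/eqP.
have sD : Defs.skew (V - (k2 / (2 * k1)) *: wedge u v).
  by rewrite /Defs.skew linearB linearZ /= sV skew_wedge scalerN opprB opprK addrC.
apply: skew_orthogonal_eq0 => // W sW.
rewrite mulmxBl raddfB /= -scalemxAl mxtraceZ mxtrace_wedge_skew //.
apply: (mulfI k10); rewrite mulr0 -(orth W sW); by field.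
Qed.

Lemma wedge_fixpoint V v x (c r : R) : Defs.skew V -> dotv v v = 1 ->
  1 + c * r != 0 -> V = c *: wedge (r *: (V *m v) - x) v ->
  V = - (c / (1 + c * r)) *: wedge x v.
Proof.
move=> sV v1 cr0 VE.
have Vv : V *m v = (c / (1 + c * r)) *: (x - dotv x v *: v).
  apply: (scalerI cr0); rewrite scalerA mulrCA mulfV // mulr1 scalerDl scale1r.
  rewrite {1}VE -scalemxAl wedge_mul v1 scale1r dotvC (dotvBr v) dotvZr.
  rewrite dotv_skew // mulr0 sub0r -scalerA -scalerDr opprB addrA subrK.
  by rewrite addrC dotvC scaleNr.
rewrite {1}VE Vv scalerA wedgeBl !wedgeZl wedgeBl wedgeZl wedge_self scaler0 subr0.
rewrite -[X in _ - X]scale1r -scalerBl scalerA; congr (_ *: _).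
by field.
Qed.

End SkewAlgebra.

Section Rolling.
Variables (R : realType) (n : nat).
Local Notation vec := 'cV[R]_n.
Local Notation mat := 'M[R]_n.
Implicit Types (phi : vec -> R) (A : mat).

Lemma rotation_unitmx A : rotation A -> A \in unitmx.
Proof. by case=> _ detA; rewrite unitmxE detA unitr1. Qed.

Lemma rotation_invmx A : rotation A -> invmx A = A^T.
Proof.
move=> rotA; have [AtA _] := rotA.
by rewrite -[invmx A]mul1mx -AtA -mulmxA mulmxV ?mulmx1 // rotation_unitmx.
Qed.

Lemma unormal_unit phi x : grad phi x != 0 -> dotv (unormal phi x) (unormal phi x) = 1.
Proof.
move=> g0; have g2_gt0 := dotv_gt0 g0.
rewrite /unormal dotvZl dotvZr mulrA -expr2 exprVn sqr_sqrtr ?ltW //.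
by rewrite mulVf // gt_eqF.
Qed.

Lemma shapeopZ phi a v (k : R) : differentiable (unormal phi) a ->
  shapeop phi a (k *: v) = k *: shapeop phi a v.
Proof. by move=> dnu; rewrite /shapeop !deriveE // linearZ scalerN. Qed.

Lemma noslip_skew phi (r : R) A a W : A \in unitmx -> Defs.skew W ->
  noslip phi r A a (W *m A, r *: (W *m unormal phi a)).
Proof.
move=> UA sW; rewrite /noslip /tangentM /tangentS /= mulmxK //.
by rewrite dotvZr dotv_skew // mulr0.
Qed.

Lemma noslip_perp_wedge phi (m r gamma : R) A a N :
  0 < m -> r != 0 -> gamma != 0 -> A \in unitmx ->
  noslip_perp phi m r gamma A a N ->
  N.1 *m invmx A = (r * gamma ^+ 2)^-1 *: wedge N.2 (unormal phi a).
Proof.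
move=> m0 r0 gamma0 UA [[skN _] orth].
rewrite (skew_eq_wedge (u := N.2) (v := unormal phi a) (k1 := (r * gamma) ^+ 2 / 2)
  (k2 := r) _ skN).
- by congr (_ *: _); field; rewrite r0 gamma0.
- by rewrite mulf_neq0 // ?invr_eq0 ?(@pnatr_eq0 R 2) // expf_neq0 // mulf_neq0.
move=> W sW; have := orth _ (noslip_skew phi r a UA sW).
rewrite /kinetic /= mulmxK // dotvZr => /eqP.
by rewrite mulf_eq0 gt_eqF //= => /eqP.
Qed.

Lemma derive1_unormal_comp phi (a : R -> vec) t :
  differentiable (unormal phi) (a t) -> derivable a t 1 ->
  derivable (unormal phi \o a) t 1 /\
  derive1 (unormal phi \o a) t = - shapeop phi (a t) (derive1 a t).
Proof.
move=> dnu da; have [dnua ->] := derive1_comp_differentiable dnu da.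
by rewrite /shapeop opprK.
Qed.

Lemma derivable_angvel (A : R -> mat) t : (\forall s \near t, rotation (A s)) ->
  derivable A t 1 -> derivable (derive1 A) t 1 -> derivable (angvel A) t 1.
Proof.
move=> rotA dA ddA; apply: (@near_eq_derivable _ _ _ (fun s => derive1 A s *m (A s)^T)).
  by near=> s; rewrite /angvel rotation_invmx //; near: s.
exact: (derive1_mulmx ddA (derivable_trmx dA)).1.
Unshelve. all: by end_near.
Qed.

Lemma noslip_accel phi (r : R) (A : R -> mat) (a : R -> vec) t :
  (\forall s \near t, derive1 a s = r *: (angvel A s *m unormal phi (a s))) ->
  derivable (angvel A) t 1 -> derivable a t 1 ->
  differentiable (unormal phi) (a t) ->
  derive1 (derive1 a) t =
    r *: (derive1 (angvel A) t *m unormal phi (a t))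
    - r ^+ 2 *: (angvel A t *m shapeop phi (a t) (angvel A t *m unormal phi (a t))).
Proof.
move=> a'E dU da dnu.
have [dnua nuaE] := derive1_unormal_comp dnu da.
have [dUnua UnuaE] := derive1_mulmx dU dnua.
have a't : derive1 a t = r *: (angvel A t *m unormal phi (a t)) := nbhs_singleton a'E.
rewrite derive1E (near_eq_derive _ a'E) -derive1E.
rewrite (_ : (fun s => _) = r *: (fun s => angvel A s *m (unormal phi \o a) s)) //.
rewrite derive1E deriveZ // -derive1E UnuaE nuaE a't shapeopZ //= scalerDr.
by rewrite mulmxN scalerN -(scalemxAr r (angvel A t)) scalerA -expr2.
Qed.

Lemma constrained_newton_near (O : set vec) phi (m r gamma : R) f (I : set R)
    (A : R -> mat) (a : R -> vec) t :
  open I -> I t -> constrained_newton O phi m r gamma f I A a ->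
  \forall s \near t, rotation (A s) /\
    derive1 a s = r *: (angvel A s *m unormal phi (a s)).
Proof.
move=> oI It CN; have : \forall s \near t, I s by apply: open_nbhs_nbhs.
by apply: filterS => s /CN [rotA [_ [_ [_ [_ [_ [[_ a'E] _]]]]]]].
Qed.

Lemma gravity_constraint_force phi (m g : R) e a (u N2 : vec) : 0 < m ->
  covD phi a u = m^-1 *: (- (m * g) *: e) + N2 ->
  N2 = u + g *: e - dotv (unormal phi a) u *: unormal phi a.
Proof.
move=> m0 covDE.
have gravity : m^-1 *: (- (m * g) *: e) = - (g *: e).
  by rewrite scalerA mulrN mulKf ?lt0r_neq0 // scaleNr.
rewrite -[N2](addKr (m^-1 *: (- (m * g) *: e))) -covDE gravity opprK.
by rewrite addrC /covD addrAC.
Qed.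

End Rolling.

Theorem proposition4p1 (R : realType) (n : nat)
    (O : set 'cV[R]_n) (phi : 'cV[R]_n -> R) (e : 'cV[R]_n)
    (m r gamma g : R) (I : set R) (A : R -> 'M[R]_n) (a : R -> 'cV[R]_n) :
  0 < m -> 0 < r -> 0 < gamma ->
  regular_defining O phi -> cylinder O phi e ->
  open I ->
  constrained_newton O phi m r gamma (0, - (m * g) *: e) I A a ->
  forall t, I t ->
    [/\ derive1 a t = r *: (angvel A t *m unormal phi (a t)),
        derive1 A t = angvel A t *m A t &
        derive1 (angvel A) t =
          - ((1 + gamma ^+ 2) * r)^-1 *:
            wedge (r ^+ 2 *: (angvel A t *m
                       shapeop phi (a t) (angvel A t *m unormal phi (a t)))
                   - g *: e)
                  (unormal phi (a t))].
Proof.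
move=> m0 r0 gamma0 [oO [sm ngrad]] _ oI CN t It.
have [rotA [at_S [dA [da [ddA [_ [[_ a'E] [N [Nperp NE]]]]]]]]] := CN t It.
have UA := rotation_unitmx rotA.
have /near_andP [rot_near a'_near] := constrained_newton_near oI It CN.
have dU := derivable_angvel rot_near dA ddA.
have a''E := noslip_accel a'_near dU da
  (differentiable_unormal oO sm at_S.1 (ngrad _ at_S)).
case: NE; rewrite scaler0 add0r => U'A /(gravity_constraint_force m0) N2E.
have skU' : Defs.skew (derive1 (angvel A) t).
  by have [[skN _] _] := Nperp; rewrite -(mulmxK UA (derive1 _ t)) U'A.
have U'E : derive1 (angvel A) t = (r * gamma ^+ 2)^-1 *: wedge N.2 (unormal phi (a t)).
  by rewrite -(noslip_perp_wedge m0 (lt0r_neq0 r0) (lt0r_neq0 gamma0) UA Nperp) -U'A mulmxK.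
split => //; first by rewrite /angvel mulmxKV.
set X := (r ^+ 2 *: _ - _).
rewrite (wedge_fixpoint (x := X) (c := (r * gamma ^+ 2)^-1) (r := r) skU'
  (unormal_unit (ngrad _ at_S))).
- by congr (- _ *: _); field; rewrite !lt0r_neq0 // addr_gt0 // exprn_gt0.
- by rewrite lt0r_neq0 // addr_gt0 // mulr_gt0 // invr_gt0 mulr_gt0 // exprn_gt0.
rewrite {1}U'E N2E wedgeBl wedgeZl wedge_self scaler0 subr0 a''E.
by rewrite opprB addrA addrAC.
Qed.
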